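(* Let $m\ge 2$ and let $v_m=\sum_{\sigma\in\mathscr{T}_m}(-1)^{\sigma^{-1}(1)-1}\sigma\in\mathbb{Z}\mathcal{S}_m$. Then $$v_m=\prod_{i=2}^{m}\left(1-(-1)^i\tau_i\right)=(1-\tau_2)(1+\tau_3)(1-\tau_4)\cdots\left(1-(-1)^m\tau_m\right),$$ the product being taken in increasing order of $i$ from left to right.
   Context: $\mathcal{S}_m$ is the group of bijections of $I_m=\{1,\ldots,m\}$, with $\sigma\circ\tau$ meaning apply $\tau$ first, then $\sigma$; $\mathbb{Z}\mathcal{S}_m$ is its integral group ring, with multiplication induced by $\circ$. $\mathscr{T}_m=\{\sigma\in\mathcal{S}_m \mid \exists t\in I_m:\ \sigma(1)>\sigma(2)>\cdots>\sigma(t)=1,\ \sigma(t)<\sigma(t+1)<\cdots<\sigma(m)\}$. For $i\in I_m$, $\tau_i\in\mathcal{S}_m$ is defined by $\tau_i(j)=i+1-j$ for $1\le j\le i$ and $\tau_i(j)=j$ for $j>i$. *)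

From HB Require Import structures.
From mathcomp Require Import all_boot all_order all_fingroup all_algebra.
Set Implicit Arguments. Unset Strict Implicit. Unset Printing Implicit Defensive.
Import GRing.Theory.

(* Convention: I_m = {1,...,m} is encoded as 'I_m = {0,...,m-1}, the point k
   of I_m being the ordinal of value k-1. *)

(* Composition sigma o tau (apply tau first, then sigma).
   NB: in MathComp, (s * t)%g x = t (s x), so sigma o tau = (tau * sigma)%g. *)
Definition comp (m : nat) (s t : 'S_m) : 'S_m := (t * s)%g.

(* The integral group ring Z S_m: finitely supported functions S_m -> Z,
   i.e. formal Z-linear combinations of permutations. *)
Notation ZS m := {ffun 'S_m -> int}.

Definition gr (m : nat) (s : 'S_m) : ZS m := [ffun p => ((p == s) : int)%R].

Definition gr_one (m : nat) : ZS m := gr 1%g.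

Definition gr_mul (m : nat) (a b : ZS m) : ZS m :=
  [ffun p => (\sum_(s : 'S_m) \sum_(t : 'S_m | comp s t == p) a s * b t)%R].

(* tau_i for 1 <= i <= m: j |-> i+1-j for j <= i, j |-> j for j > i.
   In 0-based indices: k |-> (i-1) - k for k < i, k |-> k otherwise.
   (For i > m we truncate i to m, which is never used.) *)
Definition tau_val (m i k : nat) : nat :=
  if k < minn i m then (minn i m).-1 - k else k.

Lemma tau_val_lt (m i : nat) (k : 'I_m) : (tau_val m i k < m)%N.
Proof.
rewrite /tau_val; case: ifP => // H.
have H1 : (0 < minn i m)%N by apply: leq_ltn_trans H.
apply: leq_ltn_trans (leq_subr _ _) _.
by rewrite prednK // geq_minr.
Qed.

Definition tau_fun (m i : nat) (k : 'I_m) : 'I_m := Ordinal (tau_val_lt i k).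

Lemma tau_fun_inj (m i : nat) : injective (@tau_fun m i).
Proof.
move=> a b /(congr1 val) /=; rewrite /tau_val => E.
apply: val_inj => /=.
set M := minn i m in E.
case: ifP E => Ha; case: ifP => Hb //= E.
- have Ma : (a <= M.-1)%N by rewrite -ltnS prednK //; apply: leq_ltn_trans Ha.
  have Mb : (b <= M.-1)%N by rewrite -ltnS prednK //; apply: leq_ltn_trans Hb.
  by rewrite -(subKn Ma) -(subKn Mb) E.
- have : (M.-1 - a < M)%N.
    apply: leq_ltn_trans (leq_subr _ _) _; rewrite prednK //.
    by apply: leq_ltn_trans Ha.
  by rewrite E Hb.
- have : (M.-1 - b < M)%N.
    apply: leq_ltn_trans (leq_subr _ _) _; rewrite prednK //.
    by apply: leq_ltn_trans Hb.
  by rewrite -E Ha.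
Qed.

Definition tau (m i : nat) : 'S_m := perm (@tau_fun_inj m i).

Definition inT (m : nat) (s : 'S_m) : bool :=
  [exists t : 'I_m,
     [&& nat_of_ord (s t) == 0%N,
         [forall i : 'I_m, forall j : 'I_m,
            ((i < j)%N && (j <= t)%N) ==> (s j < s i)%N] &
         [forall i : 'I_m, forall j : 'I_m,
            ((t <= i)%N && (i < j)%N) ==> (s i < s j)%N]]].

(* v_m for m = n.+1 (so that the point 1 of I_m, i.e. ord0, exists):
   v_m = sum_{sigma in T_m} (-1)^(sigma^{-1}(1) - 1) sigma.
   With 0-based indexing, sigma^{-1}(1) - 1 is the value of sigma^-1 ord0. *)
Definition v (n : nat) : ZS n.+1 :=
  (\sum_(s : 'S_n.+1 | inT s) gr s *~ ((-1) ^+ nat_of_ord ((s^-1)%g ord0)))%R.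

Definition gr_prod (m : nat) (l : seq (ZS m)) : ZS m :=
  foldr (@gr_mul m) (gr_one m) l.

Definition tau_prod (m : nat) : ZS m :=
  gr_prod [seq (gr_one m - gr (tau m i) *~ ((-1) ^+ i))%R | i <- iota 2 m.-1].

(* Call p in S_(N+1) a V at level k if it fixes every point >= k and, on
   {0,...,k-1}, decreases down to the value 0 and then increases.  Let v_k be
   the signed sum of the V's at level k, so v_1 = 1 and v_m is the theorem's
   left-hand side.  A V at level k+1 takes its maximum k at an end of
   {0,...,k}: at k it is a V at level k, at 0 it becomes one after composing
   with the reversal tau_(k+1) of {0,...,k}, and no permutation is both.  Hence
   v_(k+1) = v_k (1 - (-1)^(k+1) tau_(k+1)), and induction gives the product. *)
From Pilot Require Import Defs.
From HB Require Import structures.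
From mathcomp Require Import all_boot all_order all_fingroup all_algebra.
From mathcomp Require Import zify.
Set Implicit Arguments. Unset Strict Implicit. Unset Printing Implicit Defensive.
Import GRing.Theory.

Section GroupRing.
Local Open Scope ring_scope.
Variable m : nat.
Implicit Types a b c : ZS m.

Lemma gr_mulE a b p : gr_mul a b p = \sum_(s : 'S_m) a s * b (p * s^-1)%g.
Proof.
rewrite ffunE; apply: eq_bigr => s _.
rewrite (bigD1 (p * s^-1)%g) /=; last by rewrite /Defs.comp mulgKV.
by rewrite big1 ?addr0 // => t /andP[/eqP <- /eqP]; rewrite /Defs.comp mulgK.
Qed.

Lemma gr_mul_gr a t p : gr_mul a (gr t) p = a (t^-1 * p)%g.
Proof.
rewrite gr_mulE (bigD1 (t^-1 * p)%g) //= big1.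
  by rewrite ffunE invMg invgK mulKVg eqxx mulr1 addr0.
move=> s /eqP s_neq; rewrite ffunE; case: eqP => [E|]; last by rewrite mulr0.
by case: s_neq; rewrite -E invMg invgK mulgKV.
Qed.

Lemma gr_mul1l b : gr_mul (gr_one m) b = b.
Proof.
apply/ffunP => p; rewrite gr_mulE (bigD1 1%g) //= big1.
  by rewrite ffunE eqxx mul1r invg1 mulg1 addr0.
by move=> s /negbTE s_neq1; rewrite ffunE s_neq1 mul0r.
Qed.

Lemma gr_mulr1 a : gr_mul a (gr_one m) = a.
Proof. by apply/ffunP => p; rewrite gr_mul_gr invg1 mul1g. Qed.

Lemma gr_mulA a b c : gr_mul a (gr_mul b c) = gr_mul (gr_mul a b) c.
Proof.
apply/ffunP => p; rewrite !gr_mulE.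
under [RHS]eq_bigr => u _ do rewrite gr_mulE mulr_suml.
rewrite exchange_big /=; apply: eq_bigr => s _.
rewrite (gr_mulE b c) mulr_sumr (reindex_inj (mulIg s^-1)%g) /=.
apply: eq_bigr => u _; rewrite mulrA; congr (_ * _ * c _).
by rewrite invMg invgK !mulgA mulgKV.
Qed.

Lemma gr_mulBr a b c : gr_mul a (b - c) = gr_mul a b - gr_mul a c.
Proof.
apply/ffunP => p; rewrite [RHS]ffunE [X in _ = _ + X]ffunE !gr_mulE -sumrB.
by apply: eq_bigr => s _; rewrite !ffunE mulrBr.
Qed.

Lemma gr_mulrz a b z : gr_mul a (b *~ z) = gr_mul a b *~ z.
Proof.
apply/ffunP => p; rewrite ffunMzE !gr_mulE mulrz_suml.
by apply: eq_bigr => s _; rewrite ffunMzE mulrzAr.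
Qed.

Lemma gr_prod_rcons (s : seq (ZS m)) x :
  gr_prod (rcons s x) = gr_mul (gr_prod s) x.
Proof.
elim: s => [|y s IH] /=; first by rewrite gr_mul1l gr_mulr1.
by rewrite IH gr_mulA.
Qed.

End GroupRing.

Lemma signr_reverse (R : pzRingType) k t : t <= k ->
  ((-1) ^+ t = - ((-1) ^+ (k - t) * (-1) ^+ k.+1) :> R)%R.
Proof.
move=> le_tk; rewrite -exprD.
have -> : (k - t) + k.+1 = ((k - t) + (k - t) + t).+1 by lia.
by rewrite exprS !exprD -expr2 sqrr_sign mul1r mulN1r opprK.
Qed.

Section VShapes.
Variable N : nat.
Notation I := 'I_N.+1.
Notation S := 'S_N.+1.

Lemma perm_fix_lt K (p : S) (x : I) :
  (forall i : I, K <= i -> p i = i :> nat) -> x < K -> p x < K.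
Proof.
move=> fixK lt_xK; rewrite ltnNge; apply/negP => le_K_px.
have /perm_inj px_x : p (p x) = p x by apply: val_inj; exact: fixK.
by move: le_K_px; rewrite px_x leqNgt lt_xK.
Qed.

Definition vshape k (p : S) (t : I) :=
  [/\ t < k, p t = 0 :> nat,
   (forall i : I, k <= i -> p i = i :> nat),
   (forall i j : I, i < j -> j <= t -> p j < p i) &
   (forall i j : I, t <= i -> i < j -> j < k -> p i < p j)].

Definition vshapeb k (p : S) (t : I) :=
  [&& t < k, p t == 0 :> nat,
   [forall i : I, (k <= i) ==> (p i == i :> nat)],
   [forall i : I, forall j : I, ((i < j) && (j <= t)) ==> (p j < p i)] &
   [forall i : I, forall j : I, [&& t <= i, i < j & j < k] ==> (p i < p j)]].

Lemma vshapeP k p t : reflect (vshape k p t) (vshapeb k p t).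
Proof.
apply: (iffP and5P) => [[? /eqP ? /forallP fixk /forallP dec /forallP inc]|].
  split=> // [i le_ki|i j lt_ij le_jt|i j le_ti lt_ij lt_jk].
  - exact/eqP/(implyP (fixk i)).
  - by apply: (implyP (forallP (dec i) j)); rewrite lt_ij le_jt.
  - by apply: (implyP (forallP (inc i) j)); rewrite le_ti lt_ij lt_jk.
case=> lt_tk p_t fixk dec inc; split=> //; first exact/eqP.
- by apply/forallP => i; apply/implyP => /fixk/eqP.
- by apply/forallP => i; apply/forallP => j; apply/implyP => /andP[]; exact: dec.
- by apply/forallP => i; apply/forallP => j; apply/implyP => /and3P[]; exact: inc.
Qed.

Definition vshaped k (p : S) := [exists t, vshapeb k p t].

Lemma vshapedP k p : reflect (exists t, vshape k p t) (vshaped k p).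
Proof. by apply: (iffP existsP) => -[t /vshapeP]; exists t. Qed.

Definition vpart k : ZS N.+1 :=
  [ffun p => if vshaped k p then ((-1) ^+ (p^-1)%g ord0)%R else 0%R].

Lemma perm_inv_ord0 (p : S) t : p t = 0 :> nat -> (p^-1)%g ord0 = t.
Proof. by move=> p_t; rewrite (_ : ord0 = p t) ?permK //; apply: val_inj. Qed.

Lemma vpart1 : vpart 1 = gr_one N.+1.
Proof.
apply/ffunP => p; rewrite !ffunE.
case: (vshapedP 1 p) => [[t [lt_t1 p_t fix1 _ _]]|not_v].
  suff -> : p = 1%g by rewrite invg1 perm1 eqxx.
  apply/permP => x; apply: val_inj; rewrite perm1 /=.
  have [x0|] := posnP x; last exact: fix1.
  have -> : x = t by apply: val_inj => /=; lia.
  by rewrite p_t; lia.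
case: eqP => // p1; case: not_v; exists ord0; rewrite p1.
by split=> // [|i|i j|i j]; rewrite ?perm1 //=; lia.
Qed.

Lemma vshaped_inT (s : S) : inT s = vshaped N.+1 s.
Proof.
apply/existsP/vshapedP => -[t].
  move=> /and3P[/eqP s_t /forallP dec /forallP inc]; exists t.
  split=> // [i le_i|i j lt_ij le_jt|i j le_ti lt_ij _].
  - by have := ltn_ord i; lia.
  - by apply: (implyP (forallP (dec i) j)); rewrite lt_ij le_jt.
  - by apply: (implyP (forallP (inc i) j)); rewrite le_ti lt_ij.
case=> _ s_t _ dec inc; exists t; apply/and3P; split; first exact/eqP.
- by apply/forallP => i; apply/forallP => j; apply/implyP => /andP[]; exact: dec.
- by apply/forallP => i; apply/forallP => j; apply/implyP => /andP[le_ti lt_ij];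
    exact: inc.
Qed.

Lemma v_vpart : v N = vpart N.+1.
Proof.
apply/ffunP => p; rewrite sum_ffunE.
under eq_bigr do rewrite ffunMzE ffunE.
rewrite [RHS]ffunE -vshaped_inT; case: (boolP (inT p)) => inTp.
  rewrite (bigD1 p) //= eqxx big1 ?addr0; first by rewrite mulrzz mul1r.
  by move=> s /andP[_ /negbTE]; rewrite eq_sym => ->; rewrite mul0rz.
apply: big1 => s inTs; have /negbTE -> : p != s by apply: contraNneq inTp => ->.
by rewrite mul0rz.
Qed.

Section Reversal.
Variable k : nat.
Hypothesis k_gt0 : 0 < k.
Hypothesis lt_kN : k < N.+1.
Let flip := tau N.+1 k.+1.
Let kk : I := Ordinal lt_kN.

Lemma flip_val (x : I) : flip x = (if x <= k then k - x else x) :> nat.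
Proof. by rewrite /flip permE /= /tau_val (minn_idPl lt_kN). Qed.

Lemma flip_le (x : I) : x <= k -> flip x = k - x :> nat.
Proof. by move=> le_xk; rewrite flip_val le_xk. Qed.

Lemma flip_gt (x : I) : k < x -> flip x = x.
Proof. by move=> lt_kx; apply: val_inj => /=; rewrite flip_val leqNgt lt_kx. Qed.

Lemma flipK : involutive flip.
Proof.
move=> x; have [le_xk|lt_kx] := leqP x k; last by rewrite !flip_gt.
have flip_x := flip_le le_xk; apply: val_inj => /=; rewrite flip_le; lia.
Qed.

Lemma flip_k : flip kk = ord0.
Proof. by apply: val_inj => /=; rewrite flip_le //= subnn. Qed.

Lemma flip_inv : (flip^-1)%g = flip.
Proof.
by apply: (mulgI flip); rewrite mulgV; apply/permP => x; rewrite permM perm1 flipK.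
Qed.

Lemma vshape_flip_excl (p : S) t t' : vshape k p t -> ~ vshape k (flip * p)%g t'.
Proof.
case=> _ _ fixp _ _ [_ _ fixrp _ _].
have := fixrp kk (leqnn k); rewrite permM flip_k.
rewrite -(fixp kk (leqnn k)) => /val_inj/perm_inj/(congr1 val) /=; lia.
Qed.

Lemma vshape_succ (p : S) t : vshape k p t -> vshape k.+1 p t.
Proof.
case=> lt_tk p_t fixp dec inc; split=> // [|i|i j le_ti lt_ij lt_jk]; try lia.
  by move=> le_ki; apply: fixp; lia.
have [lt_jk'|le_kj] := ltnP j k; first exact: inc.
have := fixp j le_kj; have : p i < k by apply: (perm_fix_lt fixp); lia.
lia.
Qed.

Lemma vshape_flip_succ (p : S) t : vshape k (flip * p)%g t -> vshape k.+1 p (flip t).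
Proof.
case=> lt_tk p_t fixp dec inc.
have flip_t := flip_le (ltnW lt_tk).
have p_flip x : p x = (flip * p)%g (flip x) by rewrite permM flipK.
split=> [|||i j lt_ij le_jt|i j le_ti lt_ij lt_jk].
- by rewrite flip_t; lia.
- by rewrite -p_t permM.
- by move=> i lt_ki; rewrite -(flip_gt lt_ki) -permM fixp ?flip_gt //; lia.
- rewrite flip_t in le_jt; rewrite (p_flip i) (p_flip j).
  have [i0|i_gt0] := posnP i; last by apply: inc; rewrite ?flip_le; lia.
  have /= := fixp (flip i); rewrite flip_le; last lia.
  have : (flip * p)%g (flip j) < k by apply: (perm_fix_lt fixp); rewrite flip_le; lia.
  by rewrite i0 subn0 => ? ->; lia.
- rewrite flip_t in le_ti; rewrite (p_flip i) (p_flip j).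
  by apply: dec; rewrite ?flip_le; lia.
Qed.

Lemma vshape_max_end (p : S) t :
  vshape k.+1 p t -> p ord0 = k :> nat \/ p kk = k :> nat.
Proof.
case=> _ _ fixp dec inc; set y := (p^-1)%g kk.
have p_y : p y = k :> nat by rewrite /y permKV.
have le_yk : y <= k.
  by rewrite leqNgt; apply/negP => lt_ky; have := fixp y lt_ky; lia.
have [y0|y_gt0] := posnP y.
  by left; rewrite -p_y (_ : y = ord0) //; exact: val_inj.
have [lt_yk|le_ky] := ltnP y k.
  (* otherwise the monotone branch through y would make p ord0 or p kk exceed k *)
  exfalso; have [le_yt|lt_ty] := leqP y t.
    have := dec ord0 y y_gt0 le_yt.
    have : p ord0 < k.+1 by exact: (perm_fix_lt fixp).
    lia.
  have := inc y kk (ltnW lt_ty) lt_yk (ltnSn k).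
  have : p kk < k.+1 by exact: (perm_fix_lt fixp).
  lia.
by right; rewrite -p_y (_ : y = kk) //; apply: val_inj => /=; lia.
Qed.

Lemma vshape_succ_last (p : S) t :
  vshape k.+1 p t -> p kk = k :> nat -> vshape k p t.
Proof.
case=> lt_tk p_t fixp dec inc p_k.
have lt_tk' : t < k.
  rewrite ltn_neqAle -ltnS lt_tk andbT; apply/eqP => t_k.
  have t_kk : t = kk by exact: val_inj.
  by move: p_t; rewrite t_kk p_k; lia.
split=> // [i le_ki|i j le_ti lt_ij lt_jk]; last by apply: inc; lia.
move: le_ki; rewrite leq_eqVlt => /orP[/eqP k_i|/fixp //].
have -> : i = kk by apply: val_inj; rewrite /= k_i.
by rewrite p_k.
Qed.

Lemma vshape_succ_first (p : S) t :
  vshape k.+1 p t -> p ord0 = k :> nat -> vshape k (flip * p)%g (flip t).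
Proof.
case=> lt_tk p_t fixp dec inc p_0.
have t_gt0 : 0 < t.
  rewrite lt0n; apply/eqP => t0.
  have t_0 : t = ord0 by exact: val_inj.
  by move: p_t; rewrite t_0 p_0; lia.
have flip_t := flip_le (lt_tk : t <= k).
split=> [||i le_ki|i j lt_ij le_jt|i j le_ti lt_ij lt_jk]; rewrite ?permM ?flipK //.
- by rewrite flip_t; lia.
- move: le_ki; rewrite leq_eqVlt => /orP[/eqP k_i|lt_ki]; last by rewrite flip_gt ?fixp.
  have -> : flip i = ord0 by apply: val_inj; rewrite /= flip_le -k_i ?subnn.
  by rewrite p_0.
- by rewrite flip_t in le_jt; apply: inc; rewrite ?flip_le; lia.
- by rewrite flip_t in le_ti; apply: dec; rewrite ?flip_le; lia.
Qed.

Lemma vpart_succE (p : S) :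
  vpart k.+1 p = (vpart k p - vpart k (flip * p)%g *~ (-1) ^+ k.+1)%R.
Proof.
rewrite !ffunE; case: (vshapedP k.+1 p) => [[t vp]|not_vp].
  have [p_0|p_k] := vshape_max_end vp.
    have vrp := vshape_succ_first vp p_0.
    have -> : vshaped k p = false.
      by apply/vshapedP => -[t' vp']; exact: vshape_flip_excl vp' vrp.
    have -> : vshaped k (flip * p)%g by apply/vshapedP; exists (flip t).
    have [lt_tk p_t _ _ _] := vp.
    rewrite (perm_inv_ord0 p_t) (@perm_inv_ord0 (flip * p)%g (flip t)); last first.
      by rewrite permM flipK.
    by rewrite flip_le // add0r mulrzz (signr_reverse _ (lt_tk : t <= k)).
  have vp' := vshape_succ_last vp p_k.
  have -> : vshaped k p by apply/vshapedP; exists t.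
  have -> : vshaped k (flip * p)%g = false.
    by apply/vshapedP => -[t']; exact: vshape_flip_excl vp'.
  by rewrite mul0rz subr0.
have -> : vshaped k p = false.
  by apply/vshapedP => -[t /vshape_succ vp]; apply: not_vp; exists t.
have -> : vshaped k (flip * p)%g = false.
  by apply/vshapedP => -[t /vshape_flip_succ vp]; apply: not_vp; exists (flip t).
by rewrite mul0rz subr0.
Qed.

Lemma vpart_succ :
  vpart k.+1 = gr_mul (vpart k) (gr_one N.+1 - gr flip *~ (-1) ^+ k.+1)%R.
Proof.
apply/ffunP => p; rewrite gr_mulBr gr_mulr1 gr_mulrz vpart_succE.
by rewrite [RHS]ffunE [X in _ = (_ + X)%R]ffunE ffunMzE gr_mul_gr flip_inv.
Qed.

End Reversal.

Lemma vpart_prod j : j <= N ->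
  vpart j.+1 =
  gr_prod [seq (gr_one N.+1 - gr (tau N.+1 i) *~ (-1) ^+ i)%R | i <- iota 2 j].
Proof.
elim: j => [|j IH] le_jN; first exact: vpart1.
rewrite -[j.+1]addn1 iotaD add2n map_cat cats1 gr_prod_rcons -IH; last lia.
by rewrite addn1 vpart_succ //; lia.
Qed.

End VShapes.

Theorem mainTheorem8 (n : nat) : v n.+1 = tau_prod n.+2.
Proof. by rewrite v_vpart (vpart_prod (leqnn _)). Qed.
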